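(* Let $\mathcal{C}$ be a division Cayley algebra over a field $\mathbb{F}$ with norm $\mathrm{n}$. Let $\mathcal{K}$ be a two-dimensional composition subalgebra of $\mathcal{C}$, let $x\in\mathcal{C}$ be arbitrary, and let $\varphi$ be a local automorphism of $\mathcal{C}$. Then there is an automorphism $\psi$ of $\mathcal{C}$ such that $\psi|_{\mathcal{K}}=\varphi|_{\mathcal{K}}$ and $\psi(x)=\varphi(x)$.
   Context: A Cayley (octonion) algebra over $\mathbb{F}$ is a unital nonassociative algebra $\mathcal{C}$ of dimension $8$ over $\mathbb{F}$ endowed with a quadratic form $\mathrm{n}:\mathcal{C}\to\mathbb{F}$ (the norm) such that $\mathrm{n}(xy)=\mathrm{n}(x)\mathrm{n}(y)$ for all $x,y$ and whose polar form $\mathrm{n}(x,y)=\mathrm{n}(x+y)-\mathrm{n}(x)-\mathrm{n}(y)$ is nondegenerate. It is a division Cayley algebra if it is a division algebra (equivalently, $\mathrm{n}$ is anisotropic: $\mathrm{n}(x)\neq0$ for $x\neq0$). A two-dimensional composition subalgebra $\mathcal{K}$ is a two-dimensional subalgebra containing $1$ such that the restriction of $\mathrm{n}$ to $\mathcal{K}$ is regular (its polar form restricted to $\mathcal{K}$ is nondegenerate). A linear map $\varphi:\mathcal{C}\to\mathcal{C}$ is a local automorphism if for every $y\in\mathcal{C}$ there is an automorphism $\varphi_y$ of $\mathcal{C}$ with $\varphi(y)=\varphi_y(y)$. *)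

(* A Cayley algebra over a field F is modelled as a
   finite-dimensional F-vector space C (vectType) with an explicit bilinear
   multiplication [mul], unit [one] and quadratic norm [n]. *)
From mathcomp Require Import all_boot all_order all_algebra.
Set Implicit Arguments. Unset Strict Implicit. Unset Printing Implicit Defensive.
Import GRing.Theory.
Local Open Scope ring_scope.

Section Cayley.
Variables (F : fieldType) (C : vectType F).

Definition polar (n : C -> F) (x y : C) : F := n (x + y) - n x - n y.

Definition is_bilinear_mul (mul : C -> C -> C) : Prop :=
  (forall (a : F) (x y z : C), mul (a *: x + y) z = a *: mul x z + mul y z) /\
  (forall (a : F) (x y z : C), mul z (a *: x + y) = a *: mul z x + mul z y).

Definition is_quadratic_form (n : C -> F) : Prop :=
  (forall (a : F) (x : C), n (a *: x) = a ^+ 2 * n x) /\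
  (forall (a : F) (x y z : C),
     polar n (a *: x + y) z = a * polar n x z + polar n y z).

Definition polar_nondegenerate (n : C -> F) : Prop :=
  forall x : C, (forall y : C, polar n x y = 0) -> x = 0.

Definition is_cayley_algebra (mul : C -> C -> C) (one : C) (n : C -> F) : Prop :=
  is_bilinear_mul mul /\
  (forall x, mul one x = x /\ mul x one = x) /\
  \dim (fullv : {vspace C}) = 8%N /\
  is_quadratic_form n /\
  polar_nondegenerate n /\
  (forall x y, n (mul x y) = n x * n y).

Definition is_division_algebra (mul : C -> C -> C) : Prop :=
  forall a : C, a != 0 -> forall b : C,
    (exists x, mul a x = b /\ forall x', mul a x' = b -> x' = x) /\
    (exists y, mul y a = b /\ forall y', mul y' a = b -> y' = y).

Definition is_linear_map (f : C -> C) : Prop :=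
  forall (a : F) (x y : C), f (a *: x + y) = a *: f x + f y.

Definition is_automorphism (mul : C -> C -> C) (f : C -> C) : Prop :=
  [/\ is_linear_map f, bijective f & forall x y, f (mul x y) = mul (f x) (f y)].

Definition is_local_automorphism (mul : C -> C -> C) (phi : C -> C) : Prop :=
  is_linear_map phi /\
  forall y : C, exists g : C -> C, is_automorphism mul g /\ phi y = g y.

Definition is_2dim_composition_subalgebra (mul : C -> C -> C) (one : C)
    (n : C -> F) (K : {vspace C}) : Prop :=
  [/\ \dim K = 2%N,
      one \in K,
      (forall x y, x \in K -> y \in K -> mul x y \in K)
    & forall x, x \in K -> (forall y, y \in K -> polar n x y = 0) -> x = 0].

End Cayley.

(* Write K = F 1 + F a and let g be an automorphism with g a = phi a. Then phi = g
   on K, so phi restricted to K is an isometric isomorphism onto phi(K); moreover phi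
   fixes 1 and preserves the norm, since each phi y is the image of y under some
   automorphism. Decompose x = k + w with k in K and w orthogonal to K (if w = 0,
   take any nonzero w orthogonal to K instead). As n (phi w) = n w, Cayley-Dickson
   doubling extends phi|K to an isomorphism of Q = K + K w onto
   Q' = phi(K) + phi(K) phi(w). Five linear conditions in dimension 8 leave a
   nonzero v with v orthogonal to Q and phi v orthogonal to Q', and doubling once
   more gives an isomorphism of C = Q + Q v onto Q' + Q' phi(v) = C: an
   automorphism psi that agrees with phi on K and at w, hence at x = k + w.
   Anisotropy of the norm is what makes all these norm-preserving partial maps
   injective and every nonzero vector usable for doubling. *)

From HB Require Import structures.
From mathcomp Require Import all_boot all_order all_algebra.
From mathcomp Require Import ring.
From Stdlib Require Import IndefiniteDescription.
Set Implicit Arguments. Unset Strict Implicit. Unset Printing Implicit Defensive.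
Import GRing.Theory.
Local Open Scope ring_scope.

Section LinearAlgebra.
Variables (F : fieldType) (C : vectType F).

Lemma exists_annihilated_subspace (ls : seq (C -> F)) :
  (forall i, scalar (nth (fun=> 0) ls i)) ->
  exists2 W : {vspace C}, (\dim {:C} <= \dim W + size ls)%N &
    forall w i, w \in W -> nth (fun=> 0) ls i w = 0.
Proof.
move=> ls_lin.
pose f y := \row_(i < size ls) nth (fun=> 0) ls i y.
have f_lin : linear f by move=> c y z; apply/rowP => i; rewrite !mxE ls_lin.
pose fL : {linear C -> 'rV[F]_(size ls)} := HB.pack f (GRing.isLinear.Build _ _ _ _ f f_lin).
exists (lker (linfun fL)).
  rewrite -[X in (X <= _)%N](limg_ker_dim (linfun fL) fullv) capfv leq_add2l.
  by rewrite (leq_trans (dimvS (subvf _))) // dimvf /dim /= mul1n.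
move=> w i; rewrite memv_ker lfunE => /eqP fw0.
have [lt_i | ge_i] := ltnP i (size ls); last by rewrite nth_default.
by move/rowP: fw0 => /(_ (Ordinal lt_i)); rewrite !mxE.
Qed.

Lemma linear_inj_bijective (f : C -> C) :
  is_linear_map f -> injective f -> bijective f.
Proof.
move=> f_lin f_inj.
pose fL : {linear C -> C} := HB.pack f (GRing.isLinear.Build _ _ _ _ f f_lin).
have ker0 : lker (linfun fL) == 0%VS.
  by apply/lker0P => y z; rewrite !lfunE; exact: f_inj.
exists (linfun fL)^-1%VF => y; first by have := lker0_lfunK ker0 y; rewrite lfunE.
by have := lker0_lfunVK ker0 y; rewrite lfunE.
Qed.

Section LinearMap.
Variable f : C -> C.
Hypothesis f_lin : is_linear_map f.

Lemma linear_map0 : f 0 = 0.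
Proof. by have := f_lin (-1) 0 0; rewrite scaler0 addr0 scaleN1r addNr. Qed.

Lemma linear_mapZ c y : f (c *: y) = c *: f y.
Proof. by rewrite -[c *: y]addr0 f_lin linear_map0 addr0. Qed.

Lemma linear_mapD y z : f (y + z) = f y + f z.
Proof. by rewrite -[y]scale1r f_lin !scale1r. Qed.

End LinearMap.

End LinearAlgebra.

Lemma eq_of_subr_eq (V : zmodType) (a b c d : V) : c = d -> a - b = c - d -> a = b.
Proof. by move=> -> /eqP; rewrite subrr subr_eq0 => /eqP. Qed.

Section Composition.
Variables (F : fieldType) (C : vectType F) (mul : C -> C -> C) (one : C) (n : C -> F).
Local Notation "x ** y" := (mul x y) (at level 40, left associativity).
Local Notation pl := (polar n).
Hypothesis mulcL : forall (a : F) (x y z : C), (a *: x + y) ** z = a *: (x ** z) + y ** z.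
Hypothesis mulcR : forall (a : F) (x y z : C), z ** (a *: x + y) = a *: (z ** x) + z ** y.
Hypothesis mul1c : forall x, one ** x = x.
Hypothesis mulc1 : forall x, x ** one = x.
Hypothesis normcZ : forall (a : F) (x : C), n (a *: x) = a ^+ 2 * n x.
Hypothesis polarL : forall (a : F) (x y z : C), pl (a *: x + y) z = a * pl x z + pl y z.
Hypothesis polar_nondeg : polar_nondegenerate n.
Hypothesis normcM : forall x y, n (x ** y) = n x * n y.

Lemma mulcDl x y z : (x + y) ** z = x ** z + y ** z.
Proof. by rewrite -[x]scale1r mulcL !scale1r. Qed.
Lemma mulcDr x y z : z ** (x + y) = z ** x + z ** y.
Proof. by rewrite -[x]scale1r mulcR !scale1r. Qed.
Lemma mul0c z : 0 ** z = 0.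
Proof. by have := mulcL (-1) 0 0 z; rewrite scaler0 addr0 scaleN1r addNr. Qed.
Lemma mulc0 z : z ** 0 = 0.
Proof. by have := mulcR (-1) 0 0 z; rewrite scaler0 addr0 scaleN1r addNr. Qed.
Lemma mulcZl a x z : (a *: x) ** z = a *: (x ** z).
Proof. by rewrite -[a *: x]addr0 mulcL mul0c addr0. Qed.
Lemma mulcZr a x z : z ** (a *: x) = a *: (z ** x).
Proof. by rewrite -[a *: x]addr0 mulcR mulc0 addr0. Qed.
Lemma mulcNl x z : (- x) ** z = - (x ** z).
Proof. by rewrite -scaleN1r mulcZl scaleN1r. Qed.
Lemma mulcNr x z : z ** (- x) = - (z ** x).
Proof. by rewrite -scaleN1r mulcZr scaleN1r. Qed.
Lemma mulcBl x y z : (x - y) ** z = x ** z - y ** z.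
Proof. by rewrite mulcDl mulcNl. Qed.
Lemma mulcBr x y z : z ** (x - y) = z ** x - z ** y.
Proof. by rewrite mulcDr mulcNr. Qed.

Lemma polarC x y : pl x y = pl y x.
Proof. by rewrite /polar (addrC y x) -!addrA (addrC (- n y)). Qed.
Lemma polarDl x y z : pl (x + y) z = pl x z + pl y z.
Proof. by rewrite -[x]scale1r polarL mul1r scale1r. Qed.
Lemma polar0l z : pl 0 z = 0.
Proof. by have := polarL (-1) 0 0 z; rewrite scaler0 addr0 mulN1r addNr. Qed.
Lemma polarZl a x z : pl (a *: x) z = a * pl x z.
Proof. by rewrite -[a *: x]addr0 polarL polar0l addr0. Qed.
Lemma polarNl x z : pl (- x) z = - pl x z.
Proof. by rewrite -scaleN1r polarZl mulN1r. Qed.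
Lemma polarBl x y z : pl (x - y) z = pl x z - pl y z.
Proof. by rewrite polarDl polarNl. Qed.
Lemma polarDr x y z : pl z (x + y) = pl z x + pl z y.
Proof. by rewrite polarC polarDl !(polarC z). Qed.
Lemma polar0r z : pl z 0 = 0.
Proof. by rewrite polarC polar0l. Qed.
Lemma polarZr a x z : pl z (a *: x) = a * pl z x.
Proof. by rewrite polarC polarZl polarC. Qed.
Lemma polarNr x z : pl z (- x) = - pl z x.
Proof. by rewrite polarC polarNl polarC. Qed.
Lemma polarBr x y z : pl z (x - y) = pl z x - pl z y.
Proof. by rewrite polarDr polarNr. Qed.
Lemma normcD x y : n (x + y) = n x + n y + pl x y.
Proof. by rewrite /polar; ring. Qed.
Lemma normc0 : n 0 = 0.
Proof. by rewrite -(scale0r 0) normcZ expr0n mul0r. Qed.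

Lemma eq_polar u v : (forall z, pl u z = pl v z) -> u = v.
Proof.
move=> H; apply/eqP; rewrite -subr_eq0; apply/eqP; apply: polar_nondeg => z.
by rewrite polarBl H subrr.
Qed.

(* Identities in C are checked by pairing both sides with an arbitrary [z]
   (eq_polar), expanding with this tactic and closing with ring. *)
Ltac polar_expand :=
  rewrite ?(polarDl, polarBl, polarZl, polarNl, polar0l,
            polarDr, polarBr, polarZr, polarNr, polar0r).

Lemma polar_mul2l x y z : pl (x ** y) (x ** z) = n x * pl y z.
Proof.
have := normcM x (y + z); rewrite mulcDr !normcD !normcM => H.
by apply: (eq_of_subr_eq H); ring.
Qed.
Lemma polar_mul2r x y z : pl (y ** x) (z ** x) = n x * pl y z.
Proof.
have := normcM (y + z) x; rewrite mulcDl !normcD !normcM => H.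
by apply: (eq_of_subr_eq H); ring.
Qed.

Lemma polar_mul_swapr x y w z :
  pl (x ** y) (w ** z) + pl (x ** z) (w ** y) = pl x w * pl y z.
Proof.
have := polar_mul2l (x + w) y z.
rewrite !mulcDl !polarDl !polarDr normcD (polar_mul2l x) (polar_mul2l w) => H.
by rewrite (polarC (x ** z)); apply: (eq_of_subr_eq H); ring.
Qed.
Lemma polar_mul_swapl x y w z :
  pl (y ** x) (z ** w) + pl (z ** x) (y ** w) = pl x w * pl y z.
Proof.
have := polar_mul2r (x + w) y z.
rewrite !mulcDr !polarDl !polarDr normcD (polar_mul2r x) (polar_mul2r w) => H.
by rewrite (polarC (z ** x)); apply: (eq_of_subr_eq H); ring.
Qed.

Definition tr x := pl x one.
(* Locked, so that rewriting with the bilinearity lemmas cannot unfold it. *)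
Fact cj_key : unit. Proof. by []. Qed.
Definition cj := locked_with cj_key (fun x => tr x *: one - x).
Lemma cjE x : cj x = tr x *: one - x. Proof. by rewrite [cj]unlock. Qed.

Lemma trD x y : tr (x + y) = tr x + tr y.
Proof. by rewrite /tr polarDl. Qed.

Lemma polar_mull_cj x y z : pl (x ** y) z = pl y (cj x ** z).
Proof.
have := polar_mul_swapr x y one z; rewrite !mul1c => H.
rewrite cjE mulcBl mulcZl mul1c polarBr polarZr (polarC y (x ** z)).
by apply: (eq_of_subr_eq H); rewrite /tr; ring.
Qed.
Lemma polar_mulr_cj x y z : pl (y ** x) z = pl y (z ** cj x).
Proof.
have := polar_mul_swapl x y one z; rewrite !mulc1 => H.
rewrite cjE mulcBr mulcZr mulc1 polarBr polarZr (polarC y (z ** x)).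
by apply: (eq_of_subr_eq H); rewrite /tr; ring.
Qed.

Lemma cj_mulK x y : cj x ** (x ** y) = n x *: y.
Proof. by apply: eq_polar => z; rewrite polarC -polar_mull_cj polar_mul2l polarZl polarC. Qed.

Lemma mulcc x : x ** x = tr x *: x - n x *: one.
Proof.
have := cj_mulK x one; rewrite mulc1 cjE mulcBl mulcZl mul1c => <-.
by rewrite opprB addrC subrK.
Qed.

Lemma mulcC_sum x y : x ** y + y ** x = tr x *: y + tr y *: x - pl x y *: one.
Proof.
have := mulcc (x + y); rewrite !mulcDl !mulcDr (mulcc x) (mulcc y) normcD trD => H.
apply: eq_polar => z; have := congr1 (pl ^~ z) H; polar_expand => Hz.
by apply: (eq_of_subr_eq Hz); ring.
Qed.

Lemma aut_one g : is_automorphism mul g -> g one = one.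
Proof. by case=> _ [h _ ghK] gM; have := gM one (h one); rewrite mul1c ghK mulc1. Qed.

Lemma one_neq0_dim : \dim {:C} != 0%N -> one != 0.
Proof.
apply: contraNneq => one0; rewrite dimv_eq0; apply/eqP/vspaceP => y.
by rewrite memvf memv0 -(mul1c y) one0 mul0c eqxx.
Qed.

Lemma division_normc_eq0 : is_division_algebra mul -> forall x, n x = 0 -> x = 0.
Proof.
move=> mul_div x nx0; have [// | x_neq0] := eqVneq x 0.
have [[z [xz _]] _] := mul_div x x_neq0 one.
have n0 y : n y = 0 by rewrite -(mul1c y) normcM -xz normcM nx0 !mul0r.
by apply: polar_nondeg => y; rewrite /polar !n0 subrr subr0.
Qed.

Hypothesis one_neq0 : one != 0.
Hypothesis normc_eq0 : forall x, n x = 0 -> x = 0.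

Lemma normc_neq0 x : x != 0 -> n x != 0.
Proof. by apply: contra => /eqP/normc_eq0 ->. Qed.

(* [g] maps [y ** y = tr y *: y - n y *: one] to the same relation for [g y]; unless
   [g y] is a multiple of [one] (and then [g y = y]), the coefficients must agree. *)
Lemma aut_norm g y : is_automorphism mul g -> n (g y) = n y.
Proof.
move=> g_aut; have g1 := aut_one g_aut; case: g_aut => g_lin [h hgK ghK] gM.
have gy_quad : (tr (g y) - tr y) *: g y = (n (g y) - n y) *: one.
  have := gM y y; rewrite mulcc (mulcc (g y)) -scaleNr.
  rewrite (linear_mapD g_lin) !(linear_mapZ g_lin) g1 scaleNr => H.
  apply: eq_polar => z; have := congr1 (pl ^~ z) H; polar_expand => Hz.
  by apply: (eq_of_subr_eq (esym Hz)); ring.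
have [tr_eq | tr_neq] := eqVneq (tr (g y) - tr y) 0.
  move: gy_quad; rewrite tr_eq scale0r => /esym/eqP.
  by rewrite scaler_eq0 (negbTE one_neq0) orbF subr_eq0 => /eqP.
pose c := (n (g y) - n y) / (tr (g y) - tr y).
have gyE : g y = c *: one by rewrite /c mulrC -scalerA -gy_quad scalerA mulVf ?scale1r.
have yE : y = c *: one by apply: (can_inj hgK); rewrite (linear_mapZ g_lin) g1.
by rewrite gyE -yE.
Qed.

Record is_comp_subalg (P : C -> Prop) : Prop := CompSubalg {
  comp_subalg1 : P one;
  comp_subalgL : forall a p q, P p -> P q -> P (a *: p + q);
  comp_subalgM : forall p q, P p -> P q -> P (p ** q);
  comp_subalg_nondeg : forall p, P p -> (forall q, P q -> pl p q = 0) -> p = 0 }.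

Lemma comp_subalg0 P : is_comp_subalg P -> P 0.
Proof. by case=> P1 PL _ _; have := PL (-1) _ _ P1 P1; rewrite scaleN1r addNr. Qed.

Lemma comp_subalg_cj P p : is_comp_subalg P -> P p -> P (cj p).
Proof.
move=> PS Pp; rewrite cjE -scaleN1r addrC.
by apply: (comp_subalgL PS) => //; rewrite -[_ *: _]addr0; apply: (comp_subalgL PS);
  [exact: comp_subalg1 PS | exact: comp_subalg0].
Qed.

Lemma comp_subalg_ext P Q : (forall y, P y <-> Q y) -> is_comp_subalg P -> is_comp_subalg Q.
Proof.
move=> PQ [P1 PL PM PN]; split=> [|a p q|p q|p].
- exact/PQ.
- by rewrite -!PQ; exact: PL.
- by rewrite -!PQ; exact: PM.
- by rewrite -PQ => Pp pq0; apply: PN => // q /PQ; exact: pq0.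
Qed.

(** * Cayley-Dickson doubling *)

Section CayleyDickson.
Variables (P : C -> Prop) (u : C).
Hypothesis PS : is_comp_subalg P.
Hypothesis P_orth_u : forall p, P p -> pl p u = 0.

Let P1 := comp_subalg1 PS.
Let PM := comp_subalgM PS.
Let Pcj p := @comp_subalg_cj P p PS.

Lemma tr_orth : tr u = 0.
Proof. by rewrite /tr polarC P_orth_u. Qed.

Lemma cj_orth : cj u = - u.
Proof. by rewrite cjE tr_orth scale0r sub0r. Qed.

Lemma polar_orth_mul b c : P b -> P c -> pl b (c ** u) = 0.
Proof.
by move=> Pb Pc; rewrite polarC polar_mull_cj polarC P_orth_u //; apply: PM (Pcj Pc) Pb.
Qed.

Lemma cj_orth_mul c : P c -> cj (c ** u) = - (c ** u).
Proof. by move=> Pc; rewrite cjE /tr polarC polar_orth_mul // scale0r sub0r. Qed.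

Lemma cd_mull b e : P b -> P e -> b ** (e ** u) = (e ** b) ** u.
Proof.
move=> Pb Pe; apply: eq_polar => z.
rewrite polar_mull_cj (polar_mulr_cj u (e ** b) z) cj_orth mulcNr polarNr.
have := polar_mul_swapl b e u z; rewrite P_orth_u // mul0r => /eqP.
rewrite addr_eq0 => /eqP ->; rewrite opprK.
have -> : z ** b = tr z *: b + tr b *: z - pl z b *: one - b ** z.
  by rewrite -mulcC_sum addrK.
rewrite cjE mulcBl mulcZl mul1c; polar_expand.
by rewrite !(polarC (e ** u)) (polar_orth_mul Pb Pe) (polar_orth_mul P1 Pe); ring.
Qed.

Lemma cd_mulr c d : P c -> P d -> (c ** u) ** d = (c ** cj d) ** u.
Proof.
move=> Pc Pd; apply: eq_polar => z.
rewrite polar_mulr_cj [RHS]polar_mulr_cj cj_orth mulcNr polarNr.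
have := polar_mul_swapl (cj d) c u z; rewrite (P_orth_u (Pcj Pd)) mul0r => /eqP.
by rewrite addr_eq0 => /eqP ->; rewrite opprK polarC.
Qed.

Lemma cd_mul_orth c e : P c -> P e -> (c ** u) ** (e ** u) = - (n u *: (cj e ** c)).
Proof.
move=> Pc Pe; apply: eq_polar => z.
rewrite polar_mulr_cj cj_orth_mul // mulcNr polarNr.
have := polar_mul_swapr c u z (e ** u); rewrite (cd_mull Pc Pe) polar_mul2r.
have := polar_mul2r u one e; rewrite mul1c => ->.
move/(canRL (addrK _)) => ->; rewrite cjE mulcBl mulcZl mul1c; polar_expand.
by rewrite (polarC one e) /tr; ring.
Qed.

Lemma cd_mul b c d e : P b -> P c -> P d -> P e ->
  (b + c ** u) ** (d + e ** u) = (b ** d - n u *: (cj e ** c)) + (e ** b + c ** cj d) ** u.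
Proof.
move=> Pb Pc Pd Pe.
rewrite mulcDl !mulcDr cd_mull // cd_mulr // cd_mul_orth // mulcDl.
by apply: eq_polar => z; polar_expand; ring.
Qed.

Lemma cd_polar b c d e : P b -> P c -> P d -> P e ->
  pl (b + c ** u) (d + e ** u) = pl b d + n u * pl c e.
Proof.
move=> Pb Pc Pd Pe; polar_expand.
by rewrite polar_orth_mul // (polarC (c ** u)) polar_orth_mul // polar_mul2r; ring.
Qed.

Lemma cd_norm b c : P b -> P c -> n (b + c ** u) = n b + n c * n u.
Proof. by move=> Pb Pc; rewrite normcD normcM polar_orth_mul // addr0. Qed.

End CayleyDickson.

Definition doubling (P : C -> Prop) u y := exists b c, [/\ P b, P c & y = b + c ** u].

Lemma doubling_comp_subalg P u : is_comp_subalg P -> (forall p, P p -> pl p u = 0) ->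
  n u != 0 -> is_comp_subalg (doubling P u).
Proof.
move=> PS Pu nu_neq0; have P0 := comp_subalg0 PS; have Pcj := comp_subalg_cj PS.
case: (PS) => P1 PL PM PN; split.
- by exists one, 0; rewrite mul0c addr0.
- move=> a _ _ [b [c [Pb Pc ->]]] [d [e [Pd Pe ->]]].
  exists (a *: b + d), (a *: c + e); split; [exact: PL | exact: PL |].
  by rewrite mulcL scalerDr addrACA.
- move=> _ _ [b [c [Pb Pc ->]]] [d [e [Pd Pe ->]]].
  rewrite (cd_mul PS Pu) //.
  exists ((- n u) *: (cj e ** c) + b ** d), (1 *: (e ** b) + c ** cj d).
  split; [| | by rewrite scale1r scaleNr [- _ + _]addrC];
    by apply: PL; apply: PM => //; apply: Pcj.
- move=> _ [b [c [Pb Pc ->]]] bc_orth.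
  have b0 : b = 0.
    apply: PN => // q Pq.
    have : pl (b + c ** u) (q + 0 ** u) = 0 by apply: bc_orth; exists q, 0.
    by rewrite (cd_polar PS Pu) // polar0r mulr0 addr0.
  have c0 : c = 0.
    apply: PN => // q Pq; have /eqP : n u * pl c q = 0.
      have : pl (b + c ** u) (0 + q ** u) = 0 by apply: bc_orth; exists 0, q.
      by rewrite (cd_polar PS Pu) // b0 polar0l add0r.
    by rewrite mulf_eq0 (negbTE nu_neq0) => /eqP.
  by rewrite b0 c0 mul0c addr0.
Qed.

(** * Partial isomorphisms *)

Definition rel_dom (R : C -> C -> Prop) p := exists p', R p p'.
Definition rel_img (R : C -> C -> Prop) p' := exists p, R p p'.

(* Partial isomorphisms are relations rather than maps: the doubled relation is then
   defined without first proving that b + c ** u determines b and c, and being a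
   function is recovered from norm preservation and anisotropy (iso_rel_fun). *)
Record is_iso_rel (R : C -> C -> Prop) : Prop := IsoRel {
  iso_rel1 : R one one;
  iso_relL : forall a p p' q q', R p p' -> R q q' -> R (a *: p + q) (a *: p' + q');
  iso_relM : forall p p' q q', R p p' -> R q q' -> R (p ** q) (p' ** q');
  iso_rel_norm : forall p p', R p p' -> n p' = n p }.

Section IsoRel.
Variable R : C -> C -> Prop.
Hypothesis RI : is_iso_rel R.

Lemma iso_rel0 : R 0 0.
Proof. by have := iso_relL RI (-1) (iso_rel1 RI) (iso_rel1 RI); rewrite !scaleN1r !addNr. Qed.

Lemma iso_relD p p' q q' : R p p' -> R q q' -> R (p + q) (p' + q').
Proof. by move=> Rp Rq; have := iso_relL RI 1 Rp Rq; rewrite !scale1r. Qed.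

Lemma iso_relZ a p p' : R p p' -> R (a *: p) (a *: p').
Proof. by move=> Rp; have := iso_relL RI a Rp iso_rel0; rewrite !addr0. Qed.

Lemma iso_relB p p' q q' : R p p' -> R q q' -> R (p - q) (p' - q').
Proof. by move=> Rp Rq; rewrite -!scaleN1r !(addrC p) !(addrC p'); apply: iso_relL. Qed.

Lemma iso_rel_polar p p' q q' : R p p' -> R q q' -> pl p' q' = pl p q.
Proof.
move=> Rp Rq; have Rpq := iso_relD Rp Rq.
by rewrite /polar (iso_rel_norm RI Rpq) (iso_rel_norm RI Rp) (iso_rel_norm RI Rq).
Qed.

Lemma iso_rel_cj p p' : R p p' -> R (cj p) (cj p').
Proof.
move=> Rp; have R1 := iso_rel1 RI.
by rewrite !cjE {2}/tr (iso_rel_polar Rp R1); apply: iso_relB => //; apply: iso_relZ.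
Qed.

Lemma iso_rel_fun p y z : R p y -> R p z -> y = z.
Proof.
move=> Rpy Rpz; apply/eqP; rewrite -subr_eq0; apply/eqP/normc_eq0.
by have := iso_relB Rpy Rpz; rewrite subrr => /(iso_rel_norm RI) ->; exact: normc0.
Qed.

Lemma iso_rel_inj y z p : R y p -> R z p -> y = z.
Proof.
move=> Ryp Rzp; apply/eqP; rewrite -subr_eq0; apply/eqP/normc_eq0.
by have := iso_relB Ryp Rzp; rewrite subrr => /(iso_rel_norm RI) <-; exact: normc0.
Qed.

Lemma rel_img_comp_subalg : is_comp_subalg (rel_dom R) -> is_comp_subalg (rel_img R).
Proof.
case=> _ _ _ dom_nondeg; split.
- by exists one; exact: iso_rel1.
- by move=> a p' q' [p Rp] [q Rq]; exists (a *: p + q); apply: iso_relL.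
- by move=> p' q' [p Rp] [q Rq]; exists (p ** q); apply: iso_relM.
move=> p' [p Rp] p'_orth.
have p0 : p = 0.
  apply: dom_nondeg => [|q [q' Rq]]; first by exists p'.
  by rewrite -(iso_rel_polar Rp Rq); apply: p'_orth; exists q.
by apply: iso_rel_fun Rp _; rewrite p0; exact: iso_rel0.
Qed.

Lemma iso_rel_automorphism : (forall y, rel_dom R y) ->
  exists2 psi, is_automorphism mul psi & forall p p', R p p' -> psi p = p'.
Proof.
move=> R_total; have [psi Rpsi] := functional_choice R R_total.
have psi_lin : is_linear_map psi.
  by move=> a y z; apply: iso_rel_fun (Rpsi _) _; apply: iso_relL.
exists psi; last by move=> p p' Rp; exact: iso_rel_fun (Rpsi p) Rp.
split=> //; last by move=> y z; apply: iso_rel_fun (Rpsi _) _; apply: iso_relM.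
apply: linear_inj_bijective => // y z psi_yz.
by apply: (iso_rel_inj (Rpsi y)); rewrite psi_yz.
Qed.

End IsoRel.

Lemma graph_iso_rel P f : is_comp_subalg P -> is_linear_map f -> f one = one ->
    (forall y, n (f y) = n y) -> (forall p q, P p -> P q -> f (p ** q) = f p ** f q) ->
  is_iso_rel (fun p p' => P p /\ p' = f p).
Proof.
move=> [P1 PL PM _] f_lin f1 f_norm fM; split.
- by rewrite f1.
- by move=> a p _ q _ [Pp ->] [Pq ->]; rewrite f_lin; split => //; apply: PL.
- by move=> p _ q _ [Pp ->] [Pq ->]; rewrite fM //; split => //; apply: PM.
by move=> p _ [_ ->]; exact: f_norm.
Qed.

Definition doubling_rel (R : C -> C -> Prop) u u' y y' :=
  exists b c b' c', [/\ R b b', R c c', y = b + c ** u & y' = b' + c' ** u'].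

Lemma rel_dom_doubling R u u' y :
  rel_dom (doubling_rel R u u') y <-> doubling (rel_dom R) u y.
Proof.
split=> [[_ [b [c [b' [c' [Rb Rc -> _]]]]]] | [b [c [[b' Rb] [c' Rc] ->]]]].
  by exists b, c; split=> //; [exists b' | exists c'].
by exists (b' + c' ** u'), b, c, b', c'.
Qed.

Lemma doubling_rel_embed R u u' p p' :
  is_iso_rel R -> R p p' -> doubling_rel R u u' p p'.
Proof.
by move=> RI Rp; exists p, 0, p', 0; rewrite !mul0c !addr0; split=> //; exact: iso_rel0.
Qed.

Lemma doubling_rel_orth R u u' c c' :
  is_iso_rel R -> R c c' -> doubling_rel R u u' (c ** u) (c' ** u').
Proof. by move=> RI Rc; exists 0, c, 0, c'; rewrite !add0r; split=> //; exact: iso_rel0. Qed.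

Lemma doubling_rel_iso R u u' : is_comp_subalg (rel_dom R) -> is_iso_rel R ->
    (forall p, rel_dom R p -> pl p u = 0) -> (forall p', rel_img R p' -> pl p' u' = 0) ->
    n u' = n u -> is_iso_rel (doubling_rel R u u').
Proof.
move=> domS RI dom_u img_u' nu'.
have imgS := rel_img_comp_subalg RI domS.
have dom p p' : R p p' -> rel_dom R p by exists p'.
have img p p' : R p p' -> rel_img R p' by exists p.
split.
- exists one, 0, one, 0; rewrite !mul0c !addr0.
  by split=> //; [exact: iso_rel1 | exact: iso_rel0].
- move=> a y y' z z' [b [c [b' [c' [Rb Rc -> ->]]]]] [d [e [d' [e' [Rd Re -> ->]]]]].
  exists (a *: b + d), (a *: c + e), (a *: b' + d'), (a *: c' + e').
  by split; [exact: iso_relL | exact: iso_relL | rewrite mulcL scalerDr addrACA ..].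
- move=> y y' z z' [b [c [b' [c' [Rb Rc -> ->]]]]] [d [e [d' [e' [Rd Re -> ->]]]]].
  rewrite (cd_mul domS dom_u (dom _ _ Rb) (dom _ _ Rc) (dom _ _ Rd) (dom _ _ Re)).
  rewrite (cd_mul imgS img_u' (img _ _ Rb) (img _ _ Rc) (img _ _ Rd) (img _ _ Re)) nu'.
  have Rcj := iso_rel_cj RI; have RM := iso_relM RI.
  exists (b ** d - n u *: (cj e ** c)), (e ** b + c ** cj d).
  exists (b' ** d' - n u *: (cj e' ** c')), (e' ** b' + c' ** cj d'); split=> //.
    by apply: iso_relB => //; [exact: RM | apply: iso_relZ => //; exact: RM (Rcj _ _ Re) Rc].
  by apply: iso_relD => //; [exact: RM | exact: RM Rc (Rcj _ _ Rd)].
move=> _ _ [b [c [b' [c' [Rb Rc -> ->]]]]].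
rewrite (cd_norm domS dom_u (dom _ _ Rb) (dom _ _ Rc)).
rewrite (cd_norm imgS img_u' (img _ _ Rb) (img _ _ Rc)) nu'.
by rewrite (iso_rel_norm RI Rb) (iso_rel_norm RI Rc).
Qed.

Lemma doubling_sub (P Q : C -> Prop) u y :
  (forall p, P p -> Q p) -> doubling P u y -> doubling Q u y.
Proof. by move=> PQ [b [c [Pb Pc ->]]]; exists b, c; split=> //; apply: PQ. Qed.

Lemma doubling_vspace (S : {vspace C}) u : is_comp_subalg (fun y => y \in S) ->
    (forall p, p \in S -> pl p u = 0) -> n u != 0 ->
  exists2 S' : {vspace C}, \dim S' = (\dim S).*2 &
    forall y, y \in S' <-> doubling (fun y => y \in S) u y.
Proof.
move=> SS S_u nu_neq0.
pose f y := y ** u; have f_lin : linear f by move=> a x y; exact: mulcL.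
pose fu := linfun (HB.pack f (GRing.isLinear.Build _ _ _ _ f f_lin) : {linear C -> C}).
have fuE y : fu y = y ** u by rewrite lfunE.
have fu_inj : lker fu == 0%VS.
  apply/lker0P => y z; rewrite !fuE => /eqP; rewrite -subr_eq0 -mulcBl => /eqP yzu0.
  apply/eqP; rewrite -subr_eq0; apply/eqP/normc_eq0/eqP.
  by have /eqP := congr1 n yzu0; rewrite normcM normc0 mulf_eq0 (negbTE nu_neq0) orbF.
have S_fuS : (S :&: fu @: S = 0)%VS.
  apply/eqP; rewrite -subv0; apply/subvP => y; rewrite memv_cap memv0.
  case/andP=> yS /memv_imgP [c cS yE]; apply/eqP; apply: (comp_subalg_nondeg SS) => // q qS.
  by rewrite yE fuE polarC (polar_orth_mul SS S_u).
exists (S + fu @: S)%VS.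
  by rewrite dimv_disjoint_sum // limg_dim_eq ?addnn // (eqP fu_inj) capv0.
move=> y; split.
  by case/memv_addP=> b bS [_ /memv_imgP [c cS ->] ->]; exists b, c; rewrite fuE.
by case=> b [c [bS cS ->]]; rewrite -fuE memv_add ?memv_img.
Qed.

Lemma doubling_twice_full (S : {vspace C}) u v :
    is_comp_subalg (fun y => y \in S) -> \dim {:C} = (\dim S * 4)%N ->
    (forall p, p \in S -> pl p u = 0) -> n u != 0 ->
    (forall p, doubling (fun y => y \in S) u p -> pl p v = 0) -> n v != 0 ->
  forall y, doubling (doubling (fun y => y \in S) u) v y.
Proof.
move=> SS dimC S_u nu_neq0 S1_v nv_neq0 y.
have [S1 dimS1 S1E] := doubling_vspace SS S_u nu_neq0.
have S1S : is_comp_subalg (fun y => y \in S1).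
  by apply: comp_subalg_ext (doubling_comp_subalg SS S_u nu_neq0) => z; rewrite S1E.
have [S2 dimS2 S2E] := doubling_vspace S1S (fun p pS1 => S1_v p ((S1E p).1 pS1)) nv_neq0.
have S2_full : S2 = fullv.
  by apply/eqP; rewrite eqEdim subvf dimS2 dimS1 dimC -!muln2 -mulnA /=.
by apply: (doubling_sub (fun p => (S1E p).1)); apply/S2E; rewrite S2_full memvf.
Qed.

(** * Local automorphisms *)

Section LocalAutomorphism.
Variables (K : {vspace C}) (phi : C -> C).
Hypothesis dimC : \dim {:C} = 8%N.
Hypothesis KS : is_2dim_composition_subalgebra mul one n K.
Hypothesis phi_loc : is_local_automorphism mul phi.

Let phi_lin : is_linear_map phi := phi_loc.1.

Lemma local_aut_one : phi one = one.
Proof. by have [g [g_aut ->]] := phi_loc.2 one; exact: aut_one. Qed.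

Lemma local_aut_norm y : n (phi y) = n y.
Proof. by have [g [g_aut ->]] := phi_loc.2 y; exact: aut_norm. Qed.

Lemma local_aut_polar y z : pl (phi y) (phi z) = pl y z.
Proof. by rewrite /polar -(linear_mapD phi_lin) !local_aut_norm. Qed.

Lemma comp_subalg_K : is_comp_subalg (fun y => y \in K).
Proof. by case: KS => _ K1 KM KN; split=> // c p q pK qK; rewrite memvD ?memvZ. Qed.

Lemma exists_K_generator : exists2 a, a \in K & a \notin <[one]>%VS.
Proof.
apply/subvPn; apply: contraTN isT => /dimvS.
by case: KS => -> _ _ _; rewrite dim_vline one_neq0.
Qed.

Section Generator.
Variable a : C.
Hypotheses (aK : a \in K) (a_gen : a \notin <[one]>%VS).

Lemma K_span k : k \in K -> exists al be, k = al *: one + be *: a.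
Proof.
case: KS => dimK oneK _ _.
have sub : (<[one]> + <[a]> <= K)%VS by rewrite subv_add -!memvE oneK aK.
have : (1 < \dim (<[one]> + <[a]>))%N.
  have dim1 : \dim <[one]> = 1%N by rewrite dim_vline one_neq0.
  rewrite -{1}dim1 (ltn_leqif (dimv_leqif_sup (addvSl _ _))).
  by apply: contra a_gen => /subvP; apply; apply: (subvP (addvSr _ _)); exact: memv_line.
rewrite -dimK => lt1; have /eqP KE : (<[one]> + <[a]> == K)%VS by rewrite eqEdim sub.
rewrite -KE => /memv_addP [_ /vlineP [al ->] [_ /vlineP [be ->] ->]].
by exists al, be.
Qed.

Lemma K_orth y : pl y one = 0 -> pl y a = 0 -> forall k, k \in K -> pl k y = 0.
Proof.
move=> y1 ya k /K_span [al [be ->]].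
by polar_expand; rewrite !(polarC _ y) y1 ya !mulr0 addr0.
Qed.

Lemma local_aut_mulK p q : p \in K -> q \in K -> phi (p ** q) = phi p ** phi q.
Proof.
have [g [g_aut ga]] := phi_loc.2 a; have [g_lin _ gM] := g_aut.
have phi_g k : k \in K -> phi k = g k.
  case/K_span=> al [be ->].
  rewrite phi_lin g_lin !(linear_mapZ phi_lin) !(linear_mapZ g_lin).
  by rewrite ga local_aut_one (aut_one g_aut).
case: KS => _ _ KM _ pK qK.
by rewrite !phi_g ?KM.
Qed.

Lemma exists_orth_decomposition x : exists w, [/\ w != 0,
  forall k, k \in K -> pl k w = 0 & exists2 k, k \in K & x = k \/ x = k + w].
Proof.
have [|W dimW W_orth] := @exists_annihilated_subspace F C [:: pl^~ one; pl^~ a].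
  by case=> [|[|i]] c y z /=; rewrite ?polarL // !nth_nil mulr0 addr0.
have W_orthK w : w \in W -> forall k, k \in K -> pl k w = 0.
  by move=> wW; apply: K_orth; [exact: W_orth 0%N wW | exact: W_orth 1%N wW].
have KW0 : (K :&: W = 0)%VS.
  apply/eqP; rewrite -subv0; apply/subvP => y; rewrite memv_cap memv0 => /andP [yK yW].
  by apply/eqP; apply: (comp_subalg_nondeg comp_subalg_K) => // q qK; rewrite polarC W_orthK.
have KW_full : (K + W)%VS = fullv.
  apply/eqP; rewrite eqEdim subvf dimv_disjoint_sum //.
  by case: KS dimW => -> _ _ _; rewrite addnC.
have W_neq0 : vpick W != 0.
  by rewrite vpick0 -dimv_eq0 -lt0n; move: dimW; rewrite dimC /=; case: (\dim W).
have /memv_addP [k kK [w0 w0W x_eq]] : x \in (K + W)%VS by rewrite KW_full memvf.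
have [w0_eq0 | w0_neq0] := eqVneq w0 0.
  exists (vpick W); split=> //; first exact/W_orthK/memv_pick.
  by exists k => //; left; rewrite x_eq w0_eq0 addr0.
by exists w0; split=> //; [exact: W_orthK | exists k => //; right].
Qed.

Lemma exists_doubling_orth w : exists v, [/\ v != 0,
    forall y, doubling (fun k => k \in K) w y -> pl y v = 0 &
    forall b c, b \in K -> c \in K -> pl (phi b + phi c ** phi w) (phi v) = 0].
Proof.
(* phi preserves the polar form and fixes one, so of the products in phi(K) phi(w)
   only [phi a ** phi w] needs a condition of its own. *)
pose ls := [:: pl^~ one; pl^~ a; pl^~ w; pl^~ (a ** w); fun y => pl (phi y) (phi a ** phi w)].
have [|W dimW W_orth] := @exists_annihilated_subspace F C ls.
  case=> [|[|[|[|[|i]]]]] c y z /=; rewrite ?polarL ?phi_lin //.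
  by rewrite !nth_nil mulr0 addr0.
pose v := vpick W; have vW : v \in W := memv_pick W.
have v1 : pl v one = 0 := W_orth v 0%N vW.
have va : pl v a = 0 := W_orth v 1%N vW.
have vw : pl v w = 0 := W_orth v 2%N vW.
have vaw : pl v (a ** w) = 0 := W_orth v 3%N vW.
have phiv : pl (phi v) (phi a ** phi w) = 0 := W_orth v 4%N vW.
exists v; split.
- by rewrite vpick0 -dimv_eq0 -lt0n; move: dimW; rewrite dimC /=; case: (\dim W).
- move=> _ [b [c [/K_span [al [be ->]] /K_span [ga [de ->]] ->]]].
  rewrite mulcL mulcZl mul1c; polar_expand.
  by rewrite !(polarC _ v) v1 va vw vaw; ring.
move=> b c /K_span [al [be ->]] /K_span [ga [de ->]].
rewrite !(linear_mapD phi_lin) !(linear_mapZ phi_lin) local_aut_one mulcL mulcZl mul1c.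
polar_expand; rewrite (polarC (phi a ** phi w)) phiv -local_aut_one !local_aut_polar.
by rewrite !(polarC _ v) v1 va vw; ring.
Qed.

Section Extension.
Variables w v : C.
Hypothesis w_neq0 : w != 0.
Hypothesis K_w : forall k, k \in K -> pl k w = 0.
Hypothesis v_neq0 : v != 0.
Hypothesis Kw_v : forall y, doubling (fun k => k \in K) w y -> pl y v = 0.
Hypothesis phiKw_phiv :
  forall b c, b \in K -> c \in K -> pl (phi b + phi c ** phi w) (phi v) = 0.

Let R0 p p' := p \in K /\ p' = phi p.
Let R1 := doubling_rel R0 w (phi w).
Let R2 := doubling_rel R1 v (phi v).

Lemma rel_dom_graph_K y : rel_dom R0 y <-> y \in K.
Proof. by split=> [[_ []] | yK] //; exists (phi y). Qed.

Lemma iso_rel_graph_K : is_iso_rel R0.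
Proof.
exact: graph_iso_rel comp_subalg_K phi_lin local_aut_one local_aut_norm local_aut_mulK.
Qed.

Lemma rel_dom_doubling_K y : rel_dom R1 y <-> doubling (fun k => k \in K) w y.
Proof. by rewrite rel_dom_doubling; split; apply: doubling_sub => p /rel_dom_graph_K. Qed.

Lemma iso_rel_doubling_K : is_comp_subalg (rel_dom R1) /\ is_iso_rel R1.
Proof.
have domS0 := comp_subalg_ext (fun y => iff_sym (rel_dom_graph_K y)) comp_subalg_K.
have dom0_w p : rel_dom R0 p -> pl p w = 0 by move/rel_dom_graph_K; exact: K_w.
split.
  apply: comp_subalg_ext (doubling_comp_subalg domS0 dom0_w (normc_neq0 w_neq0)) => y.
  by rewrite rel_dom_doubling.
apply: doubling_rel_iso iso_rel_graph_K dom0_w _ (local_aut_norm w) => //.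
by move=> _ [p [pK ->]]; rewrite local_aut_polar K_w.
Qed.

Lemma iso_rel_doubling_twice_K : is_iso_rel R2.
Proof.
have [domS1 R1I] := iso_rel_doubling_K.
apply: doubling_rel_iso R1I _ _ (local_aut_norm v) => //.
  by move=> p /rel_dom_doubling_K; exact: Kw_v.
by move=> _ [_ [b [c [b' [c' [[bK ->] [cK ->] _ ->]]]]]]; exact: phiKw_phiv.
Qed.

Lemma rel_dom_doubling_twice_K y : rel_dom R2 y.
Proof.
apply/rel_dom_doubling; apply: doubling_sub (fun p => (rel_dom_doubling_K p).2) _.
apply: doubling_twice_full comp_subalg_K _ K_w (normc_neq0 w_neq0) Kw_v (normc_neq0 v_neq0) y.
by case: KS => -> _ _ _; rewrite dimC.
Qed.

Lemma local_aut_extend_K_orth :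
  exists2 psi, is_automorphism mul psi & (forall k, k \in K -> psi k = phi k) /\ psi w = phi w.
Proof.
have [psi psi_aut psiR] :=
  iso_rel_automorphism iso_rel_doubling_twice_K rel_dom_doubling_twice_K.
have [_ R1I] := iso_rel_doubling_K; have R0I := iso_rel_graph_K.
have R2_R0 p p' : R0 p p' -> R2 p p'.
  by move=> R0p; apply: (doubling_rel_embed _ _ R1I); exact: doubling_rel_embed.
exists psi => //; split=> [k kK | ]; first by apply/psiR/R2_R0.
have R0_1 : R0 one (phi one) by split=> //; case: KS.
have := doubling_rel_orth w (phi w) R0I R0_1; rewrite local_aut_one !mul1c => R1w.
by apply/psiR/(doubling_rel_embed v (phi v) R1I).
Qed.

End Extension.

End Generator.

Lemma local_aut_extend_K_point x : exists psi, [/\ is_automorphism mul psi,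
  forall k, k \in K -> psi k = phi k & psi x = phi x].
Proof.
have [a aK a_gen] := exists_K_generator.
have [w [w_neq0 K_w [k kK x_eq]]] := exists_orth_decomposition aK a_gen x.
have [v [v_neq0 Kw_v phiKw_phiv]] := exists_doubling_orth aK a_gen w.
have [psi psi_aut [psiK psiw]] :=
  local_aut_extend_K_orth aK a_gen w_neq0 K_w v_neq0 Kw_v phiKw_phiv.
have [psi_lin _ _] := psi_aut.
exists psi; split=> //; case: x_eq => ->; first exact: psiK.
by rewrite (linear_mapD psi_lin) (linear_mapD phi_lin) psiK ?psiw.
Qed.

End LocalAutomorphism.
End Composition.

Theorem lemma4p4 (F : fieldType) (C : vectType F) (mul : C -> C -> C) (one : C)
    (n : C -> F) (K : {vspace C}) (x : C) (phi : C -> C) :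
  is_cayley_algebra mul one n ->
  is_division_algebra mul ->
  is_2dim_composition_subalgebra mul one n K ->
  is_local_automorphism mul phi ->
  exists psi : C -> C,
    [/\ is_automorphism mul psi,
        (forall k, k \in K -> psi k = phi k)
      & psi x = phi x].
Proof.
move=> [[mulL mulR] [mul1 [dimC [[normZ polarL] [nondeg normM]]]]] mul_div KS phi_loc.
have mul1c y : mul one y = y by case: (mul1 y).
have mulc1 y : mul y one = y by case: (mul1 y).
have one_neq0 : one != 0 by apply: (one_neq0_dim mulL mul1c); rewrite dimC.
have normc_eq0 := division_normc_eq0 mul1c nondeg normM mul_div.
exact: local_aut_extend_K_point mulL mulR mul1c mulc1 normZ polarL nondeg normM one_neq0
  normc_eq0 K phi dimC KS phi_loc x.
Qed.
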